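(* Let $(\mathcal{S},d_{\mathcal{S}})$, $(\mathcal{A},d_{\mathcal{A}})$ be metric spaces, $\gamma\in[0,1)$, $\rho$ an initial state distribution, $r$ a reward function, and $\pi,\pi'$ policies and $p,p'$ configurations. Then $$\Big|\mathbb{A}_{\pi,p}^{\pi',p'}-\big(\mathbb{A}_{\pi,p}^{\pi,p'}+\mathbb{A}_{\pi,p}^{\pi',p}\big)\Big|\le\int_{\mathcal{S}}\mu_{\pi,p}(ds)\,\mathcal{W}\big(\pi'(\cdot|s),\pi(\cdot|s)\big)\,\big\|A_{\pi,p}^{\pi,p'}\big\|_L.$$
   Context: $r:\mathcal{S}\times\mathcal{A}\times\mathcal{S}\to\mathbb{R}$. A configuration is a Markov kernel $p(\cdot|s,a)$ on $\mathcal{S}$; a policy is a Markov kernel $\pi(\cdot|s)$ on $\mathcal{A}$; $p_\pi(ds'|s)=\int\pi(da|s)p(ds'|s,a)$. Value functions (assumed well defined): $V_{\pi,p}(s)=\int\pi(da|s)\int p(ds'|s,a)(r(s,a,s')+\gamma V_{\pi,p}(s'))$, $Q_{\pi,p}(s,a)=\int p(ds'|s,a)(r(s,a,s')+\gamma V_{\pi,p}(s'))$, $U_{\pi,p}(s,a,s')=r(s,a,s')+\gamma V_{\pi,p}(s')$. $\mu_{\pi,p}=(1-\gamma)\sum_{t\ge0}\gamma^t\rho p_\pi^t$. Relative advantages: $A_{\pi,p}^{\pi',p}(s)=\int\pi'(da|s)(Q_{\pi,p}(s,a)-V_{\pi,p}(s))$; $A_{\pi,p}^{\pi,p'}(s,a)=\int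 p'(ds'|s,a)(U_{\pi,p}(s,a,s')-Q_{\pi,p}(s,a))$, a function on $\mathcal{S}\times\mathcal{A}$; $A_{\pi,p}^{\pi',p'}(s)=\int\pi'(da|s)\int p'(ds'|s,a)(U_{\pi,p}(s,a,s')-V_{\pi,p}(s))$. Expected versions: $\mathbb{A}_{\pi,p}^{\pi',p}=\int\mu_{\pi,p}(ds)A_{\pi,p}^{\pi',p}(s)$, $\mathbb{A}_{\pi,p}^{\pi,p'}=\int\mu_{\pi,p}(ds)\int\pi(da|s)A_{\pi,p}^{\pi,p'}(s,a)$, $\mathbb{A}_{\pi,p}^{\pi',p'}=\int\mu_{\pi,p}(ds)A_{\pi,p}^{\pi',p'}(s)$. $\|\cdot\|_L$ is the Lipschitz semi-norm, with $\mathcal{S}\times\mathcal{A}$ carrying the metric $d_{\mathcal{S}}(s,\bar s)+d_{\mathcal{A}}(a,\bar a)$; $\mathcal{W}(\mu,\nu)=\sup_{\|f\|_L\le1}|\int f\,d(\mu-\nu)|$. *)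

From HB Require Import structures.
From mathcomp Require Import all_boot all_order all_algebra.
From mathcomp Require Import all_classical all_reals all_analysis.

Set Implicit Arguments.
Unset Strict Implicit.
Unset Printing Implicit Defensive.

Import Order.TTheory GRing.Theory Num.Theory.
Import numFieldNormedType.Exports.

Local Open Scope classical_set_scope.
Local Open Scope ring_scope.

Section defs.
Context {R : realType}.

Definition is_metric {T : Type} (dist : T -> T -> R) : Prop :=
  [/\ forall x y, dist x y = 0 <-> x = y,
      forall x y, dist x y = dist y x &
      forall x y z, dist x z <= dist x y + dist y z].

Definition metric_open {T : Type} (dist : T -> T -> R) : set (set T) :=
  [set B | forall x, B x -> exists e : R, 0 < e /\ forall y, dist x y < e -> B y].

Definition borel_for {d} {T : measurableType d} (dist : T -> T -> R) : Prop :=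
  (@measurable d T) = <<s metric_open dist >>.

Local Open Scope ereal_scope.

(** Lipschitz semi-norm ||g||_L of g : S x A -> \bar R, where S x A carries the
    metric dS(s,s0) + dA(a,a0). Defined as the infimum of the Lipschitz
    constants (+oo if none). *)
Definition lip_norm2 {S A : Type} (dS : S -> S -> R) (dA : A -> A -> R)
    (g : S -> A -> \bar R) : \bar R :=
  ereal_inf [set L%:E | L in [set L : R | (0 <= L)%R /\
    forall s a s0 a0, `|g s a - g s0 a0| <= L%:E * (dS s s0 + dA a a0)%:E]].

(** Wasserstein-1 distance (Kantorovich-Rubinstein form). *)
Definition wasserstein {d} {A : measurableType d} (dA : A -> A -> R)
    (m n : set A -> \bar R) : \bar R :=
  ereal_sup [set `| \int[m]_a (f a)%:E - \int[n]_a (f a)%:E |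
    | f in [set f : A -> R | measurable_fun [set: A] f /\
                             forall a b, (`|f a - f b| <= dA a b)%R]].

Context {d1 d2 : measure_display} {S : measurableType d1} {A : measurableType d2}.

Definition Ufun (gamma : R) (r : S -> A -> S -> R) (V : S -> R) s a s' : R :=
  (r s a s' + gamma * V s')%R.

Definition Qfun (p : (S * A)%type -> {measure set S -> \bar R})
    (U : S -> A -> S -> R) s a : \bar R :=
  \int[p (s, a)]_s' (U s a s')%:E.

Definition adv_pol (pi' : S -> {measure set A -> \bar R})
    (Q : S -> A -> \bar R) (V : S -> R) s : \bar R :=
  \int[pi' s]_a (Q s a - (V s)%:E).

Definition adv_conf (p' : (S * A)%type -> {measure set S -> \bar R})
    (U : S -> A -> S -> R) (Q : S -> A -> \bar R) s a : \bar R :=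
  \int[p' (s, a)]_s' ((U s a s')%:E - Q s a).

Definition adv_both (pi' : S -> {measure set A -> \bar R})
    (p' : (S * A)%type -> {measure set S -> \bar R})
    (U : S -> A -> S -> R) (V : S -> R) s : \bar R :=
  \int[pi' s]_a \int[p' (s, a)]_s' (U s a s' - V s)%:E.

Fixpoint state_dist (rho : set S -> \bar R) (pi : S -> {measure set A -> \bar R})
    (p : (S * A)%type -> {measure set S -> \bar R}) (t : nat) : set S -> \bar R :=
  match t with
  | O => rho
  | t'.+1 => fun B => \int[state_dist rho pi p t']_s \int[pi s]_a p (s, a) B
  end.

Definition occupancy (gamma : R) (rho : set S -> \bar R)
    (pi : S -> {measure set A -> \bar R})
    (p : (S * A)%type -> {measure set S -> \bar R}) : set S -> \bar R :=
  fun B => (1 - gamma)%:E * \sum_(t <oo) ((gamma ^+ t)%:E * state_dist rho pi p t B).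

End defs.

From HB Require Import structures.
From mathcomp Require Import all_boot all_order all_algebra.
From mathcomp Require Import all_classical all_reals all_analysis.
From mathcomp Require Import ring lra measurable_realfun.
Import Order.TTheory GRing.Theory Num.Theory.
Import numFieldNormedType.Exports.
Local Open Scope classical_set_scope.
Local Open Scope ring_scope.

(* State by state, the value terms cancel and the decomposition error is
   \int pi'(da|s) G s a - \int pi(da|s) G s a with G := A_{pi,p}^{pi,p'}.
   As G s is ||G||_L-Lipschitz in a, the Kantorovich-Rubinstein form of the
   Wasserstein distance bounds it by W(pi'(.|s), pi(.|s)) ||G||_L, and this
   integrates against mu, which is a measure as a scaled series of the state
   distributions. Since 0 * +oo = 0, the case ||G||_L = +oo still needs
   W = 0 to force pi'(.|s) = pi(.|s) on Borel sets: truncated distances to the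
   complement of an open set are Lipschitz and increase to its indicator. *)

Lemma ler_dist_min2l (R : realDomainType) (c x y e : R) :
  `|x - y| <= e -> `|Num.min c x - Num.min c y| <= e.
Proof.
move=> hxy; have := ler_norm (x - y); have := ler_norm (y - x).
rewrite distrC => h1 h2.
case: (leP c x) => hx; case: (leP c y) => hy;
  rewrite ?(min_l (ltW _)) ?min_l ?min_r ?(min_r (ltW _)) ?subrr ?normr0 //;
  try (by apply: le_trans hxy); rewrite ler_norml; apply/andP; split; lra.
Qed.

Definition lipschitz_for {R : realType} {T : Type} (dist : T -> T -> R) (c : R)
    (f : T -> R) :=
  forall x y, `|f x - f y| <= c * dist x y.

Section metric.
Context {R : realType} {T : Type} {dist : T -> T -> R} (hd : is_metric dist).

Lemma metric_xx x : dist x x = 0.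
Proof. by case: hd => h0 _ _; apply/h0. Qed.

Lemma metric_sym x y : dist x y = dist y x.
Proof. by case: hd. Qed.

Lemma metric_triangle x y z : dist x z <= dist x y + dist y z.
Proof. by case: hd. Qed.

Lemma metric_ge0 x y : 0 <= dist x y.
Proof.
have := metric_triangle x y x; rewrite metric_xx (metric_sym y x); lra.
Qed.

End metric.

Lemma metric_open_setI_closed {R : realType} {T : Type} (dist : T -> T -> R) :
  setI_closed (metric_open dist).
Proof.
move=> X Y hX hY x [Xx Yx].
have [e1 [e10 h1]] := hX x Xx; have [e2 [e20 h2]] := hY x Yx.
exists (Num.min e1 e2); split; first by rewrite lt_min e10 e20.
by move=> y; rewrite lt_min => /andP[y1 y2]; split; [exact: h1|exact: h2].
Qed.

Definition dist_set {R : realType} {T : Type} (dist : T -> T -> R) (B : set T)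
    (x : T) : R :=
  inf [set dist x b | b in B].

Section dist_set.
Context {R : realType} {T : Type} {dist : T -> T -> R} (hd : is_metric dist).
Context {B : set T} {b0 : T} (Bb0 : B b0).

Let dist_set_has_lbound x : has_lbound [set dist x b | b in B].
Proof. by exists 0 => _ [b _ <-]; exact: metric_ge0. Qed.

Let dist_set_nonempty x : [set dist x b | b in B] !=set0.
Proof. by exists (dist x b0), b0. Qed.

Lemma dist_set_ge0 x : 0 <= dist_set dist B x.
Proof. by apply: lb_le_inf => // _ [b _ <-]; exact: metric_ge0. Qed.

Lemma dist_set_le x b : B b -> dist_set dist B x <= dist x b.
Proof. by move=> Bb; apply: ge_inf => //; exists b. Qed.

Lemma dist_set_eq0 x : B x -> dist_set dist B x = 0.
Proof.
move=> Bx; apply/eqP; rewrite eq_le dist_set_ge0 andbT.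
by rewrite -(metric_xx hd x) dist_set_le.
Qed.

Lemma dist_set_lipschitz : lipschitz_for dist 1 (dist_set dist B).
Proof.
have le x y : dist_set dist B x <= dist x y + dist_set dist B y.
  rewrite -lerBlDl; apply: lb_le_inf => // _ [b Bb <-].
  by rewrite lerBlDl (le_trans (dist_set_le x b Bb)) ?(metric_triangle hd).
move=> x y; rewrite mul1r ler_norml.
by have := le x y; have := le y x; rewrite (metric_sym hd y x) => ? ?; lra.
Qed.

Lemma dist_set_gt0 x : metric_open dist (~` B) -> ~ B x -> 0 < dist_set dist B x.
Proof.
move=> oB nBx; have [e [e0 he]] := oB x nBx.
apply: (lt_le_trans e0); apply: lb_le_inf => // _ [b Bb <-].
by rewrite leNgt; apply/negP => /he.
Qed.

End dist_set.

Section lipschitz_measurable.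
Context {R : realType} {d : measure_display} {A : measurableType d}
  {dA : A -> A -> R} (hdA : is_metric dA) (hbA : borel_for dA).

Lemma lipschitz_measurable (f : A -> R) (c : R) :
  0 <= c -> lipschitz_for dA c f -> measurable_fun setT f.
Proof.
move=> c0 hf.
apply: (@measurability _ _ _ _ setT f (@RGenOInfty.G R)).
  exact: RGenOInfty.measurableE.
move=> _ [_ [x ->] <-].
rewrite hbA; apply: sub_sigma_algebra => a /= [_].
rewrite in_itv /= andbT => xfa.
(* c + 1 rather than c, so that c = 0 needs no separate case *)
exists ((f a - x) / (c + 1)); split; first by apply: divr_gt0; lra.
move=> b hab; split => //=; rewrite in_itv /= andbT.
have := hf a b; rewrite ler_norml => /andP[_ fab].
have cd : c * dA a b <= (c + 1) * dA a b.
  by apply: ler_wpM2r; [exact: (metric_ge0 hdA)|lra].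
have cx : (c + 1) * dA a b < f a - x by rewrite mulrC -ltr_pdivlMr //; lra.
lra.
Qed.

End lipschitz_measurable.

Definition open_approx {R : realType} {T : Type} (dist : T -> T -> R)
    (O : set T) (n : nat) (x : T) : R :=
  Num.min 1 (n.+1%:R * dist_set dist (~` O) x).

Section open_approximation.
Context {R : realType} {d : measure_display} {A : measurableType d}
  {dA : A -> A -> R} (hdA : is_metric dA) (hbA : borel_for dA).
Context {O : set A} {b0 : A} (nOb0 : (~` O) b0).

Lemma open_approx_ge0 n a : 0 <= open_approx dA O n a.
Proof.
by rewrite le_min ler01 mulr_ge0 ?ler0n ?(dist_set_ge0 hdA nOb0).
Qed.

Lemma open_approx_le1 n a : open_approx dA O n a <= 1.
Proof. by rewrite ge_min lexx. Qed.

Lemma open_approx_lipschitz n : lipschitz_for dA n.+1%:R (open_approx dA O n).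
Proof.
move=> a b; set D := dist_set dA (~` O).
apply: ler_dist_min2l.
rewrite -mulrBr normrM ger0_norm ?ler0n // ler_wpM2l ?ler0n //.
by rewrite -[X in _ <= X]mul1r; exact: (dist_set_lipschitz hdA nOb0 a b).
Qed.

Lemma open_approx_nondecreasing a : nondecreasing_seq (open_approx dA O ^~ a).
Proof.
move=> n k nk; rewrite /open_approx le_min ge_min lexx /= ge_min; apply/orP; right.
by rewrite ler_wpM2r ?ler_nat // (dist_set_ge0 hdA nOb0).
Qed.

Lemma open_approx_cvg a : metric_open dA O ->
  open_approx dA O n a @[n --> \oo] --> (\1_O a : R).
Proof.
move=> oO.
have [Oa|nOa] := pselect (O a); last first.
  rewrite indicE memNset // /open_approx (dist_set_eq0 hdA nOb0) //.
  by under eq_fun do rewrite mulr0 min_r //; exact: cvg_cst.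
rewrite indicE mem_set //; apply: cvg_near_cst.
have Da : 0 < dist_set dA (~` O) a.
  by apply: (dist_set_gt0 nOb0) => [|/(_ Oa)]; rewrite ?setCK.
near=> n; rewrite /open_approx min_l // -ler_pdivrMr // div1r.
near: n; exists (Num.bound (dist_set dA (~` O) a)^-1) => // n /= hn.
apply: le_trans (ltW (archi_boundP _)) _; first by rewrite invr_ge0 ltW.
by rewrite ler_nat; exact: leqW.
Unshelve. all: by end_near.
Qed.

Lemma measurable_open_approx n : measurable_fun setT (open_approx dA O n).
Proof.
exact: lipschitz_measurable hdA hbA _ _ (ler0n _ _) (open_approx_lipschitz n).
Qed.

Lemma cvg_integral_open_approx (m : {measure set A -> \bar R}) :
  metric_open dA O -> (\int[m]_a (open_approx dA O n a)%:E)%E @[n --> \oo] --> m O.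
Proof.
move=> oO; have mO : measurable O by rewrite hbA; exact: sub_sigma_algebra.
have -> : m O = (\int[m]_a (\1_O a)%:E)%E by rewrite integral_indic // setIT.
have -> : (fun a => (\1_O a)%:E)
          = (fun a => limn (fun n => (open_approx dA O n a)%:E)).
  apply/funext => a; rewrite -(cvg_lim _ (open_approx_cvg a oO)) // -EFin_lim //.
  by apply/cvg_ex; exists (\1_O a : R); exact: open_approx_cvg.
apply: cvg_monotone_convergence => //.
- by move=> n; apply/measurable_EFinP; exact: measurable_open_approx.
- by move=> n a _; rewrite lee_fin open_approx_ge0.
- by move=> a _ n k nk; rewrite lee_fin open_approx_nondecreasing.
Qed.

Lemma integrable_open_approx (m : {measure set A -> \bar R}) n :
  (m setT < +oo)%E -> m.-integrable setT (EFin \o open_approx dA O n).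
Proof.
move=> mfin; apply: measurable_bounded_integrable => //.
  exact: measurable_open_approx.
rewrite /bounded_near; exists 1; split => // M M1 a _ /=.
rewrite ger0_norm ?open_approx_ge0 //.
exact: le_trans (open_approx_le1 _ _) (ltW M1).
Qed.

End open_approximation.
Section lip_norm2.
Context {R : realType} {S A : Type} (dS : S -> S -> R) (dA : A -> A -> R).
Local Open Scope ereal_scope.

Lemma lip_norm2_ge0 (F : S -> A -> \bar R) : 0 <= lip_norm2 dS dA F.
Proof. by apply/ereal_infP => _ [L [L0 _] <-]; rewrite lee_fin. Qed.

Lemma lip_norm2_lipschitz (F : S -> A -> \bar R) s :
  dS s s = 0%R -> (forall a b, (0 <= dA a b)%R) ->
  (forall a, F s a \is a fin_num) -> lip_norm2 dS dA F \is a fin_num ->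
  lipschitz_for dA (fine (lip_norm2 dS dA F)) (fun a => fine (F s a)).
Proof.
move=> dss dA0 Ffin Lfin a b; rewrite /lip_norm2 in Lfin *.
set Ls := [set L : R | _] in Lfin *.
have LsP L : Ls L -> (`|fine (F s a) - fine (F s b)| <= L * dA a b)%R.
  move=> [_ hL]; have := hL s a s b; rewrite dss add0r.
  by rewrite -(fineK (Ffin a)) -(fineK (Ffin b)) -EFinB abse_EFin -EFinM lee_fin.
have [L0 LsL0] : exists L, Ls L.
  apply: contrapT => noL; move: Lfin.
  suff -> : [set L%:E | L in Ls] = set0 by rewrite ereal_inf0.
  by apply/seteqP; split => // x [L LsL _]; apply: noL; exists L.
have [d0|dneq0] := eqVneq (dA a b) 0%R.
  by have := LsP _ LsL0; rewrite d0 !mulr0.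
have dpos : (0 < dA a b)%R by rewrite lt_neqAle eq_sym dneq0 dA0.
rewrite -ler_pdivrMr // -lee_fin fineK //.
by apply/ereal_infP => _ [L LsL <-]; rewrite lee_fin ler_pdivrMr // LsP.
Qed.

End lip_norm2.

Section wasserstein.
Context {R : realType} {d : measure_display} {A : measurableType d}
  {dA : A -> A -> R} (hdA : is_metric dA) (hbA : borel_for dA).
Local Open Scope ereal_scope.

Lemma le_wasserstein (m1 m2 : {measure set A -> \bar R}) {f : A -> R} :
  measurable_fun setT f -> lipschitz_for dA 1 f ->
  `|\int[m1]_a (f a)%:E - \int[m2]_a (f a)%:E| <= wasserstein dA m1 m2.
Proof.
move=> mf hf; apply: ereal_sup_ubound; exists f => //.
by split=> // a b; rewrite -[leRHS]mul1r.
Qed.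

Lemma wasserstein_ge0 (m1 m2 : {measure set A -> \bar R}) :
  0 <= wasserstein dA m1 m2.
Proof.
apply: le_trans (le_wasserstein m1 m2 (measurable_cst (0%R : R)) _) => //.
by move=> a b /=; rewrite subrr normr0 mulr_ge0 ?(metric_ge0 hdA).
Qed.

Context {m1 m2 : {measure set A -> \bar R}}.
Hypotheses (m1T : m1 setT = 1%E) (m2T : m2 setT = 1%E).

Lemma wasserstein_lipschitz_le {f : A -> R} {c : R} :
  (0 <= c)%R -> lipschitz_for dA c f ->
  m1.-integrable setT (EFin \o f) -> m2.-integrable setT (EFin \o f) ->
  `|\int[m1]_a (f a)%:E - \int[m2]_a (f a)%:E| <= wasserstein dA m1 m2 * c%:E.
Proof.
rewrite le_eqVlt => /predU1P[<- hf _ _|c0 hf i1 i2].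
  have [a0 _] : [set: A] !=set0.
    apply/set0P/eqP => T0; move: m1T; rewrite T0 measure0 => -[] /eqP.
    by rewrite eq_sym oner_eq0.
  have fE a : f a = f a0.
    by apply/eqP; rewrite -subr_eq0 -normr_le0 -(mul0r (dA a a0)) hf.
  under eq_integral do rewrite fE.
  under [X in _ - X]eq_integral do rewrite fE.
  by rewrite !integral_cst // m1T m2T mule1 subee // abse0 mule0.
have glip : lipschitz_for dA 1 (fun a => f a / c)%R.
  move=> a b /=; rewrite mul1r -mulrBl normrM [(`|c^-1|)%R]gtr0_norm ?invr_gt0 //.
  by rewrite ler_pdivrMr // mulrC hf.
have := le_wasserstein m1 m2
  (lipschitz_measurable hdA hbA _ _ ler01 glip) glip.
have intZ (m : {measure set A -> \bar R}) : m.-integrable setT (EFin \o f) ->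
    \int[m]_a (f a / c)%:E = c^-1%:E * \int[m]_a (f a)%:E.
  by move=> im; under eq_integral do rewrite EFinM muleC; rewrite integralZl.
rewrite (intZ _ i1) (intZ _ i2) -(fineK (integrable_fin_num _ i1)) //.
rewrite -(fineK (integrable_fin_num _ i2)) // -!EFinM -EFinB -mulrBr.
rewrite abse_EFin normrM [(`|c^-1|)%R]gtr0_norm ?invr_gt0 //.
by rewrite EFinM lee_pdivrMl // muleC.
Qed.

Lemma wasserstein0_integral_eq {f : A -> R} {c : R} :
  wasserstein dA m1 m2 = 0 -> (0 <= c)%R -> lipschitz_for dA c f ->
  m1.-integrable setT (EFin \o f) -> m2.-integrable setT (EFin \o f) ->
  \int[m1]_a (f a)%:E = \int[m2]_a (f a)%:E.
Proof.
move=> W0 c0 hf i1 i2; have := wasserstein_lipschitz_le c0 hf i1 i2.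
rewrite W0 mul0e -(fineK (integrable_fin_num _ i1)) //.
rewrite -(fineK (integrable_fin_num _ i2)) //.
by rewrite -EFinB abse_EFin lee_fin normr_le0 subr_eq0 => /eqP ->.
Qed.

Lemma measure_open_eq_of_wasserstein0 : wasserstein dA m1 m2 = 0 ->
  forall O, metric_open dA O -> m1 O = m2 O.
Proof.
move=> W0 O oO.
have [[b0 nOb0]|allO] := pselect (exists b, (~` O) b); last first.
  have -> : O = setT.
    by apply/seteqP; split=> // a _; apply: contra_notP allO; exists a.
  by rewrite m1T m2T.
have eqn : (fun n => \int[m1]_a (open_approx dA O n a)%:E)
         = (fun n => \int[m2]_a (open_approx dA O n a)%:E).
  apply/funext => n.
  apply: (wasserstein0_integral_eq W0 (ler0n _ n.+1)
    (open_approx_lipschitz hdA nOb0 n)).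
  - by apply: (integrable_open_approx hdA hbA nOb0 m1 n); rewrite m1T ltey.
  - by apply: (integrable_open_approx hdA hbA nOb0 m2 n); rewrite m2T ltey.
have := cvg_integral_open_approx hdA hbA nOb0 m1 oO; rewrite eqn => c1.
exact: cvg_unique c1 (cvg_integral_open_approx hdA hbA nOb0 m2 oO).
Qed.

Lemma wasserstein_eq0_measure : wasserstein dA m1 m2 = 0 ->
  forall B, measurable B -> m1 B = m2 B.
Proof.
move=> W0; apply: (measure_unique (metric_open dA) (fun=> setT)).
- exact: hbA.
- exact: metric_open_setI_closed.
- by move=> _ x _; exists 1%R.
- by rewrite bigcup_const.
- exact: measure_open_eq_of_wasserstein0.
- by move=> _; rewrite m1T ltey.
Qed.

Lemma wasserstein_lip_norm2_le {S : Type} (dS : S -> S -> R)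
    (F : S -> A -> \bar R) (s : S) :
  dS s s = 0%R -> (forall a, F s a \is a fin_num) ->
  m1.-integrable setT (F s) -> m2.-integrable setT (F s) ->
  `|\int[m1]_a F s a - \int[m2]_a F s a|
    <= wasserstein dA m1 m2 * lip_norm2 dS dA F.
Proof.
move=> dss Ffin i1 i2.
have [Lfin|Linf] := boolP (lip_norm2 dS dA F \is a fin_num).
  have FE : F s = EFin \o (fun a => fine (F s a)).
    by apply/funext => a /=; rewrite fineK.
  rewrite -(fineK Lfin) FE; rewrite FE in i1 i2.
  apply: wasserstein_lipschitz_le => //.
    by rewrite fine_ge0 // lip_norm2_ge0.
  exact: lip_norm2_lipschitz (metric_ge0 hdA) Ffin Lfin.
have -> : lip_norm2 dS dA F = +oo.
  by apply/eqP; move: Linf; rewrite ge0_fin_numE ?lip_norm2_ge0 // ltey negbK.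
have [W0|Wneq0] := eqVneq (wasserstein dA m1 m2) 0.
  rewrite W0 mul0e.
  suff -> : \int[m1]_a F s a = \int[m2]_a F s a.
    by rewrite subee ?abse0 // (integrable_fin_num _ i2).
  by apply: eq_measure_integral => B mB _; exact: wasserstein_eq0_measure W0 B mB.
by rewrite gt0_muley ?leey // lt0e Wneq0 wasserstein_ge0.
Qed.

End wasserstein.

Section mass_one_integral.
Context {d : measure_display} {T : measurableType d} {R : realType}.
Context {m : {measure set T -> \bar R}} (mT : m setT = 1%E).
Local Open Scope ereal_scope.

Lemma integrable_cst_mass1 (c : \bar R) :
  c \is a fin_num -> m.-integrable setT (cst c).
Proof.
move=> cfin; apply/integrableP; split => //.
rewrite (_ : (fun x => `|cst c x|) = cst `|c|) // integral_cst // mT mule1.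
by rewrite -(fineK cfin) abse_EFin ltey.
Qed.

Lemma integralB_cst (f : T -> \bar R) (c : \bar R) :
  m.-integrable setT f -> c \is a fin_num ->
  \int[m]_x (f x - c) = \int[m]_x f x - c.
Proof.
move=> intf cfin; rewrite (_ : (fun x => f x - c) = f \- cst c) //.
by rewrite integralB // ?integrable_cst_mass1 // integral_cst // mT mule1.
Qed.

End mass_one_integral.

Lemma ge0_le_integral_nonmeasurable {d : measure_display} {T : measurableType d}
    {R : realType} (mu : {measure set T -> \bar R}) (f g : T -> \bar R) :
  (forall x, 0 <= f x)%E -> (forall x, f x <= g x)%E ->
  (\int[mu]_x f x <= \int[mu]_x g x)%E.
Proof.
move=> f0 fg.
rewrite !ge0_integralTE //; last by move=> x; exact: le_trans (f0 x) (fg x).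
apply: ereal_sup_le => _ [h hf <-]; exists h => //= x.
exact: le_trans (hf x) (fg x).
Qed.

Section advantage_decomposition.
Context {R : realType} {d1 d2 : measure_display}
  {S : measurableType d1} {A : measurableType d2}.
Variables (pi pi' : R.-pker S ~> A) (p' : R.-pker (S * A)%type ~> S).
Variables (U : S -> A -> S -> R) (Q : S -> A -> \bar R) (V : S -> R).
Hypothesis Qfin : forall s a, Q s a \is a fin_num.
Hypothesis intU :
  forall s a, (p' (s, a)).-integrable setT (fun s' => (U s a s')%:E).
Local Open Scope ereal_scope.

Let P s a := \int[p' (s, a)]_s' (U s a s')%:E.

Lemma adv_confE s a : adv_conf p' U Q s a = P s a - Q s a.
Proof. by rewrite /adv_conf integralB_cst ?prob_kernel. Qed.

Lemma adv_conf_fin s a : adv_conf p' U Q s a \is a fin_num.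
Proof.
by rewrite adv_confE fin_numB Qfin andbT (integrable_fin_num _ (intU s a)).
Qed.

Section integrable_in_state.
Variables (m : {measure set A -> \bar R}) (s : S).
Hypotheses (intQ : m.-integrable setT (Q s)) (intP : m.-integrable setT (P s)).

Lemma integrable_adv_conf : m.-integrable setT (adv_conf p' U Q s).
Proof.
rewrite (_ : adv_conf p' U Q s = P s \- Q s); first exact: integrableB.
by apply/funext => a; rewrite adv_confE.
Qed.

Lemma integral_adv_conf :
  \int[m]_a adv_conf p' U Q s a = \int[m]_a P s a - \int[m]_a Q s a.
Proof. by rewrite -integralB //; apply: eq_integral => a _; rewrite adv_confE. Qed.

End integrable_in_state.

Variable s : S.
Hypotheses (intpiQ : (pi s).-integrable setT (Q s))
  (intpi'Q : (pi' s).-integrable setT (Q s))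
  (intpiP : (pi s).-integrable setT (P s))
  (intpi'P : (pi' s).-integrable setT (P s)).

Lemma adv_both_decomposition :
  adv_both pi' p' U V s - (\int[pi s]_a adv_conf p' U Q s a + adv_pol pi' Q V s)
  = \int[pi' s]_a adv_conf p' U Q s a - \int[pi s]_a adv_conf p' U Q s a.
Proof.
have Vfin : (V s)%:E \is a fin_num by [].
have both : adv_both pi' p' U V s = \int[pi' s]_a P s a - (V s)%:E.
  rewrite -integralB_cst ?prob_kernel //; apply: eq_integral => a _.
  under eq_integral do rewrite EFinB.
  by rewrite integralB_cst ?prob_kernel.
have pol : adv_pol pi' Q V s = \int[pi' s]_a Q s a - (V s)%:E.
  by rewrite /adv_pol integralB_cst ?prob_kernel.
rewrite both pol !integral_adv_conf //.
move: (integrable_fin_num measurableT intpiQ).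
move: (integrable_fin_num measurableT intpi'Q).
move: (integrable_fin_num measurableT intpiP).
move: (integrable_fin_num measurableT intpi'P).
move=> /fineK <- /fineK <- /fineK <- /fineK <-.
by rewrite -!EFinB; congr EFin; ring.
Qed.

Variables (dS : S -> S -> R) (dA : A -> A -> R).
Hypotheses (hdS : is_metric dS) (hdA : is_metric dA) (hbA : borel_for dA).

Lemma adv_both_decomposition_le :
  `|adv_both pi' p' U V s - (\int[pi s]_a adv_conf p' U Q s a + adv_pol pi' Q V s)|
    <= wasserstein dA (pi' s) (pi s) * lip_norm2 dS dA (adv_conf p' U Q).
Proof.
have pi'T : pi' s setT = 1 by exact: prob_kernel.
have piT : pi s setT = 1 by exact: prob_kernel.
rewrite adv_both_decomposition; apply: (wasserstein_lip_norm2_le hdA hbA pi'T piT).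
- exact: metric_xx hdS s.
- exact: adv_conf_fin.
- exact: integrable_adv_conf.
- exact: integrable_adv_conf.
Qed.

End advantage_decomposition.

Section mbind.
Context {R : realType} {d d' : measure_display}
  {X : measurableType d} {Y : measurableType d'}.
Variables (m : {measure set X -> \bar R}) (k : R.-ker X ~> Y).
Local Open Scope ereal_scope.

Definition mbind : set Y -> \bar R := fun B => \int[m]_x k x B.

Let mbind0 : mbind set0 = 0.
Proof.
by rewrite /mbind (eq_integral (cst 0)) ?integral0 // => x _; rewrite measure0.
Qed.

Let mbind_ge0 B : 0 <= mbind B.
Proof. by apply: integral_ge0 => x _; exact: measure_ge0. Qed.

Let mbind_sigma_additive : semi_sigma_additive mbind.
Proof.
move=> F mF tF mUF; rewrite [X in _ --> X](_ : _ =
  \int[m]_x (\sum_(n <oo) k x (F n))); last first.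
  apply: eq_integral => x _.
  by apply/esym/cvg_lim => //; exact/measure_semi_sigma_additive.
apply/cvg_closeP; split.
  by apply: is_cvg_nneseries => n _ _; exact: integral_ge0.
rewrite closeE // integral_nneseries // => n.
exact: measurable_kernel.
Qed.

HB.instance Definition _ := isMeasure.Build _ _ R
  mbind mbind0 mbind_ge0 mbind_sigma_additive.

End mbind.

Section occupancy_measure.
Context {R : realType} {d1 d2 : measure_display}
  {S : measurableType d1} {A : measurableType d2}.
Variables (pi : R.-pker S ~> A) (p : R.-pker (S * A)%type ~> S).
Variables (rho : {measure set S -> \bar R}) (gamma : R).
Hypothesis hgamma : 0 <= gamma < 1.

Fixpoint state_measure (t : nat) : {measure set S -> \bar R} :=
  if t is t'.+1 then mbind (state_measure t') (pi \; p)%E else rho.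

Lemma state_distE t : state_dist rho pi p t = state_measure t.
Proof. by elim: t => [//|t IH] /=; apply/funext => B; rewrite IH. Qed.

Let one_sub_gamma_ge0 : 0 <= 1 - gamma.
Proof. by case/andP: hgamma => _ /ltW; rewrite subr_ge0. Qed.

Let gamma_pow_ge0 t : 0 <= gamma ^+ t.
Proof. by case/andP: hgamma => gamma0 _; exact: exprn_ge0. Qed.

Definition occupancy_measure : {measure set S -> \bar R} :=
  mscale (NngNum one_sub_gamma_ge0)
    (mseries (fun t => mscale (NngNum (gamma_pow_ge0 t)) (state_measure t)) 0).

Lemma occupancyE : occupancy gamma rho pi p = occupancy_measure.
Proof.
apply/funext => B; rewrite /occupancy /= /mscale /mseries /=.
by congr (_ * _)%E; apply: eq_eseriesr => t _; rewrite state_distE.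
Qed.

End occupancy_measure.

Theorem lemma4 (R : realType) (d1 d2 : measure_display)
    (S : measurableType d1) (A : measurableType d2)
    (dS : S -> S -> R) (dA : A -> A -> R)
    (hdS : is_metric dS) (hdA : is_metric dA)
    (hbS : borel_for dS) (hbA : borel_for dA)
    (gamma : R) (hgamma : 0 <= gamma < 1)
    (rho : probability S R) (r : S -> A -> S -> R)
    (pi pi' : R.-pker S ~> A) (p p' : R.-pker (S * A)%type ~> S)
    (V : S -> R) :
  let U := Ufun gamma r V in
  let Q := Qfun p U in
  let mu := occupancy gamma rho pi p in
  (* V = V_{pi,p}: the (well defined) value function, i.e. Bellman equation *)
  (forall s, (V s)%:E = (\int[pi s]_a Q s a)%E) ->
  (* well-definedness of the integrals involved *)
  (forall s a, (p (s, a)).-integrable [set: S] (fun s' => (U s a s')%:E)) ->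
  (forall s a, (p' (s, a)).-integrable [set: S] (fun s' => (U s a s')%:E)) ->
  (forall s, (pi s).-integrable [set: A] (Q s)) ->
  (forall s, (pi' s).-integrable [set: A] (Q s)) ->
  (forall s, (pi s).-integrable [set: A]
                (fun a => (\int[p' (s, a)]_s' (U s a s')%:E)%E)) ->
  (forall s, (pi' s).-integrable [set: A]
                (fun a => (\int[p' (s, a)]_s' (U s a s')%:E)%E)) ->
  mu.-integrable [set: S] (adv_both pi' p' U V) ->
  mu.-integrable [set: S] (fun s => (\int[pi s]_a adv_conf p' U Q s a)%E) ->
  mu.-integrable [set: S] (adv_pol pi' Q V) ->
  (`| \int[mu]_s adv_both pi' p' U V s
      - (\int[mu]_s \int[pi s]_a adv_conf p' U Q s a
         + \int[mu]_s adv_pol pi' Q V s) |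
   <= \int[mu]_s (wasserstein dA (pi' s) (pi s) * lip_norm2 dS dA (adv_conf p' U Q)))%E.
Proof.
(* The Bellman equation for V is not needed: the value terms cancel. *)
move=> U Q mu _ intpU intp'U intpiQ intpi'Q intpiP intpi'P.
move=> int_both int_conf int_pol.
have Qfin s a : Q s a \is a fin_num by exact: integrable_fin_num (intpU s a).
rewrite /mu occupancyE in int_both int_conf int_pol *.
rewrite -integralD // -integralB //; last exact: integrableD.
apply: le_trans (le_abse_integral _ _ _) _ => //.
  have := integrableD measurableT int_conf int_pol.
  by move/(integrableB measurableT int_both)/integrableP => [].
(* s |-> wasserstein dA (pi' s) (pi s) need not be measurable. *)
apply: ge0_le_integral_nonmeasurable => s; first exact: abse_ge0.
exact: adv_both_decomposition_le.
Qed.
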